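(* Let $A,B\in\mathbb{R}^{n\times n}$ with $A$ symmetric positive definite, and suppose the block matrix $\begin{pmatrix}A & B\\ B^\intercal & A\end{pmatrix}$ is positive definite. Then $$2\begin{pmatrix}A & B\\ B^\intercal & A\end{pmatrix}^{-1}-\begin{pmatrix}A & 0\\ 0 & A\end{pmatrix}^{-1}$$ is positive definite. *)

From HB Require Import structures.
From mathcomp Require Import all_boot all_order all_algebra.
Set Implicit Arguments. Unset Strict Implicit. Unset Printing Implicit Defensive.
Import Order.TTheory GRing.Theory Num.Theory.
Local Open Scope ring_scope.

Definition posdef (R : realFieldType) (n : nat) (M : 'M[R]_n) : Prop :=
  M^T = M /\ (forall x : 'cV[R]_n, x != 0 -> 0 < (x^T *m M *m x) 0 0).

From HB Require Import structures.
From mathcomp Require Import all_boot all_order all_algebra.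
Import Order.TTheory GRing.Theory Num.Theory.
Local Open Scope ring_scope.

(* Flipping the signs of the off-diagonal blocks is the congruence by
   J = diag(1, -1), so N := [[A, -B], [-B^T, A]] is positive definite along
   with M := [[A, B], [B^T, A]], and M + N = 2 diag(A, A).  The claim is then
   twice the positive definiteness of M^-1 - (M + N)^-1, which holds for all
   positive definite M and N because this difference equals
   M^-1 (M^-1 + N^-1)^-1 M^-1. *)

Section PositiveDefinite.
Context {R : realFieldType} {n : nat}.
Implicit Types (M N P : 'M[R]_n).

Lemma posdef_unitmx {M} : posdef M -> M \in unitmx.
Proof.
case=> _ pM; rewrite unitmxE unitfE; apply/negP => /det0P [v nz vM].
by have := pM v^T; rewrite trmx_eq0 nz trmxK vM mul0mx mxE ltxx => /(_ isT).
Qed.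

Lemma posdef_congr {M P} : posdef M -> P \in unitmx -> posdef (P^T *m M *m P).
Proof.
case=> sM pM uP; split; first by rewrite !trmx_mul trmxK sM mulmxA.
move=> x nx.
have -> : x^T *m (P^T *m M *m P) *m x = (P *m x)^T *m M *m (P *m x).
  by rewrite trmx_mul !mulmxA.
apply: pM; apply: contra nx => /eqP Px.
by rewrite -(mulKmx uP x) Px mulmx0.
Qed.

Lemma posdefD {M N} : posdef M -> posdef N -> posdef (M + N).
Proof.
case=> sM pM [sN pN]; split; first by rewrite linearD /= sM sN.
by move=> x nx; rewrite mulmxDr mulmxDl mxE addr_gt0 ?pM ?pN.
Qed.

Lemma posdefZ {a : R} {M} : 0 < a -> posdef M -> posdef (a *: M).
Proof.
move=> a_gt0 [sM pM]; split; first by rewrite linearZ /= sM.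
by move=> x nx; rewrite -scalemxAr -scalemxAl mxE mulr_gt0 ?pM.
Qed.

Lemma posdef_invmx {M} : posdef M -> posdef (invmx M).
Proof.
move=> pdM; have uM := posdef_unitmx pdM; have [sM _] := pdM.
have -> : invmx M = (invmx M)^T *m M *m invmx M.
  by rewrite trmx_inv sM mulVmx // mul1mx.
by apply: posdef_congr; rewrite ?unitmx_inv.
Qed.

End PositiveDefinite.

Lemma invmxM (R : comUnitRingType) (n : nat) (M N : 'M[R]_n) :
  M \in unitmx -> N \in unitmx -> invmx (M *m N) = invmx N *m invmx M.
Proof.
move=> uM uN; have uMN : M *m N \in unitmx by rewrite unitmx_mul uM uN.
have rinv : M *m N *m (invmx N *m invmx M) = 1%:M.
  by rewrite mulmxA mulmxK // mulmxV.
by rewrite -[LHS]mulmx1 -rinv mulmxA mulVmx // mul1mx.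
Qed.

Lemma posdef_block_mxN (R : realFieldType) (m n : nat)
    (A : 'M[R]_m) (B : 'M[R]_(m, n)) (C : 'M[R]_(n, m)) (D : 'M[R]_n) :
  posdef (block_mx A B C D) -> posdef (block_mx A (- B) (- C) D).
Proof.
move=> pdM; pose J : 'M[R]_(m + n) := block_mx 1%:M 0 0 (- 1%:M).
have JT : J^T = J by rewrite tr_block_mx !trmx0 trmx1 linearN /= trmx1.
have JJ : J *m J = 1%:M.
  by rewrite mulmx_block !(mulmx0, mul0mx, mulmx1, addr0, add0r, mulmxN)
    opprK scalar_mx_block.
have uJ : J \in unitmx by case: (mulmx1_unit JJ).
suff <- : J^T *m block_mx A B C D *m J = block_mx A (- B) (- C) D.
  exact: posdef_congr.
by rewrite JT !mulmx_block !(mulmx0, mul0mx, mulmx1, mul1mx, addr0, add0r,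
  mulmxN, mulNmx) opprK.
Qed.

(* Via M + N = M (M^-1 + N^-1) N. *)
Lemma invmx_subD (R : fieldType) (n : nat) (M N : 'M[R]_n) :
    let S := invmx M + invmx N in
    M \in unitmx -> N \in unitmx -> S \in unitmx ->
  invmx M - invmx (M + N) = invmx M *m invmx S *m invmx M.
Proof.
move=> S uM uN uS.
have -> : M + N = M *m S *m N.
  by rewrite mulmxDr mulmxV // mulmxDl mul1mx mulmxKV // addrC.
rewrite !invmxM ?unitmx_mul ?uM ?uS // mulmxA.
by apply/eqP; rewrite subr_eq -mulmxDl -mulmxDl mulmxV // mul1mx.
Qed.

Lemma posdef_invmx_subD (R : realFieldType) (n : nat) (M N : 'M[R]_n) :
  posdef M -> posdef N -> posdef (invmx M - invmx (M + N)).
Proof.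
move=> pdM pdN; have pdMi := posdef_invmx pdM.
have pdS := posdefD pdMi (posdef_invmx pdN).
rewrite invmx_subD ?posdef_unitmx //.
have [sMi _] := pdMi; rewrite -{1}sMi.
by apply: posdef_congr; [exact: posdef_invmx | rewrite unitmx_inv posdef_unitmx].
Qed.

Theorem lemmaA1 (R : realFieldType) (n : nat) (A B : 'M[R]_n) :
  posdef A ->
  posdef (block_mx A B B^T A) ->
  posdef (2%:R *: invmx (block_mx A B B^T A) - invmx (block_mx A 0 0 A)).
Proof.
(* posdef A is implied by the block hypothesis and not needed. *)
move=> _ pdM; set M := block_mx A B B^T A; set D := block_mx A 0 0 A.
set N := block_mx A (- B) (- B^T) A.
have pdN : posdef N by apply: posdef_block_mxN.
have sumMN : M + N = 2%:R *: D.
  by rewrite add_block_mx !subrr scale_block_mx !scaler0 scaler_nat mulr2n.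
have n2 : (2%:R : R) != 0 by rewrite pnatr_eq0.
have invD : invmx D = 2%:R *: invmx (M + N).
  rewrite sumMN invmxZ ?scalerA ?divff ?scale1r //.
  by rewrite -sumMN; apply/posdef_unitmx/posdefD.
rewrite invD -scalerBr; apply: posdefZ; first by rewrite ltr0n.
exact: posdef_invmx_subD.
Qed.
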